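(* Let $S$ be a completely simple semigroup which is the union $S=S_1\cup S_2$ of two left simple subsemigroups $S_1,S_2$. Then either $S$ is left simple, or the union is disjoint and $S_1$ and $S_2$ are the minimal left ideals of $S$.
   Context: A semigroup is completely simple if it has no zero element, has no proper two-sided ideal, and contains an idempotent that is minimal for the order $p\le q\iff p=pq=qp$ on idempotents. A semigroup is left simple if it has no proper left ideal (a left ideal of $S$ being a non-empty $I\subset S$ with $SI\subset I$). *)

Definition associative_op {T : Type} (op : T -> T -> T) : Prop :=
  forall x y z, op x (op y z) = op (op x y) z.

Definition same_set {T : Type} (A B : T -> Prop) : Prop :=
  forall x, A x <-> B x.

Definition subset {T : Type} (A B : T -> Prop) : Prop :=
  forall x, A x -> B x.

Definition subsemigroup {T : Type} (op : T -> T -> T) (A : T -> Prop) : Prop :=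
  (exists a, A a) /\ forall x y, A x -> A y -> A (op x y).

Definition left_ideal_in {T : Type} (op : T -> T -> T) (A I : T -> Prop) : Prop :=
  (exists i, I i) /\ subset I A /\ forall a i, A a -> I i -> I (op a i).

Definition ideal_in {T : Type} (op : T -> T -> T) (A I : T -> Prop) : Prop :=
  (exists i, I i) /\ subset I A /\
  (forall a i, A a -> I i -> I (op a i)) /\
  (forall a i, A a -> I i -> I (op i a)).

Definition left_simple_in {T : Type} (op : T -> T -> T) (A : T -> Prop) : Prop :=
  forall I, left_ideal_in op A I -> same_set I A.

Definition setT {T : Type} : T -> Prop := fun _ => True.

Definition is_zero {T : Type} (op : T -> T -> T) (z : T) : Prop :=
  forall x, op z x = z /\ op x z = z.

Definition idempotent {T : Type} (op : T -> T -> T) (e : T) : Prop :=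
  op e e = e.

Definition idem_le {T : Type} (op : T -> T -> T) (p q : T) : Prop :=
  p = op p q /\ p = op q p.

Definition completely_simple {T : Type} (op : T -> T -> T) : Prop :=
  (~ exists z, is_zero op z) /\
  (forall I, ideal_in op setT I -> same_set I setT) /\
  (exists e, idempotent op e /\
     forall f, idempotent op f -> idem_le op f e -> f = e).

Definition minimal_left_ideal {T : Type} (op : T -> T -> T) (L : T -> Prop) : Prop :=
  left_ideal_in op setT L /\
  forall J, left_ideal_in op setT J -> subset J L -> same_set J L.

(* In a completely simple semigroup every set [S a] of left multiples is a
   minimal left ideal, i.e. [a] is a left multiple of [t a] for all [a], [t]:
   writing [a = u e v] with [e] the primitive idempotent, this reduces to
   [e v] being a left multiple of [s e v], which holds because every left ideal
   contained in [S e] contains [e].  A left simple subsemigroup containing [a]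
   lies in [S a], so [S1] lies in [S a] and [S2] in [S b].  If [b] is in [S a],
   then [S = S a] and [S] is left simple; otherwise the minimal left ideals
   [S a] and [S b] are disjoint, and since they cover [S] they are [S1] and
   [S2]. *)

From Stdlib Require Import Classical.

Section Semigroup.
Context {T : Type} (op : T -> T -> T).
Hypothesis opA : associative_op op.

Definition left_multiples (a : T) : T -> Prop := fun x => exists t, x = op t a.

Lemma op_eq_r (u v w : T) : op u v = w -> forall z, op u (op v z) = op w z.
Proof. intros <- z. apply opA. Qed.

Lemma left_multiples_trans (a b x : T) :
  left_multiples a b -> left_multiples b x -> left_multiples a x.
Proof. intros [s ->] [t ->]. exists (op t s). apply opA. Qed.

Lemma left_ideal_left_multiples (a : T) : left_ideal_in op setT (left_multiples a).
Proof.
  split; [exists (op a a), a; reflexivity |].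
  split; [intros x _; exact I |].
  intros y x _ [t ->]. exists (op y t). apply opA.
Qed.

Lemma left_ideal_contains_left_multiples (J : T -> Prop) (j : T) :
  left_ideal_in op setT J -> J j -> subset (left_multiples j) J.
Proof. intros [_ [_ Jmul]] Jj x [t ->]. apply Jmul; [exact I | exact Jj]. Qed.

Lemma left_simple_subset_left_multiples (X : T -> Prop) (a : T) :
  subsemigroup op X -> left_simple_in op X -> X a -> subset X (left_multiples a).
Proof.
  intros [_ Xmul] Xsimple Xa x Xx.
  set (J := fun z => exists t, X t /\ z = op t a).
  assert (HJ : left_ideal_in op X J).
  { split; [exists (op a a), a; split; [exact Xa | reflexivity] |].
    split.
    - intros z [t [Xt ->]]. apply Xmul; assumption.
    - intros y z Xy [t [Xt ->]]. exists (op y t).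
      split; [apply Xmul; assumption | apply opA]. }
  destruct (proj2 (Xsimple J HJ x) Xx) as [t [_ ->]]. exists t. reflexivity.
Qed.

Lemma ideal_simple_factor :
  (forall J, ideal_in op setT J -> same_set J setT) ->
  forall a x, exists u v, x = op u (op a v).
Proof.
  intros Ssimple a x.
  set (J := fun z => exists u v, z = op u (op a v)).
  assert (HJ : ideal_in op setT J).
  { split; [exists (op a (op a a)), a, a; reflexivity |].
    split; [intros z _; exact I |].
    split.
    - intros w z _ [u [v ->]]. exists (op w u), v. apply opA.
    - intros w z _ [u [v ->]]. exists u, (op v w). rewrite !opA. reflexivity. }
  exact (proj2 (Ssimple J HJ x) I).
Qed.

Section PrimitiveIdempotent.
Variable e : T.
Hypothesis e_idem : idempotent op e.
Hypothesis e_primitive : forall f, idempotent op f -> idem_le op f e -> f = e.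
Hypothesis ideal_simple : forall J, ideal_in op setT J -> same_set J setT.

Lemma left_ideal_below_idempotent_contains (L : T -> Prop) :
  (exists a, L a) -> (forall a, L a -> op a e = a) ->
  (forall y a, L a -> L (op y a)) -> L e.
Proof.
  intros [a La] Lbelow Lmul.
  pose proof (Lbelow a La) as ae.
  destruct (ideal_simple_factor ideal_simple a e) as [x [y exay]].
  pose proof (op_eq_r _ _ _ e_idem) as ee.
  pose proof (op_eq_r _ _ _ ae) as aez.
  assert (xay : forall z, op x (op a (op y z)) = op e z).
  { intro z. rewrite exay, !opA. reflexivity. }
  (* [f = e y e x a] is an idempotent below [e], since [x a y = e] and [a e = a]. *)
  set (f := op e (op y (op e (op x a)))).
  assert (Lf : L f) by (unfold f; repeat apply Lmul; exact La).
  assert (f_eq_e : f = e).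
  { apply e_primitive; unfold idempotent, idem_le, f; rewrite <- !opA.
    - rewrite aez, xay, !ee. reflexivity.
    - split; [rewrite ae | rewrite ee]; reflexivity. }
  rewrite <- f_eq_e. exact Lf.
Qed.

Lemma idempotent_mul_mem_left_multiples (s c : T) :
  left_multiples (op s (op e c)) (op e c).
Proof.
  set (b := op s (op e c)).
  set (L := fun x => op x e = x /\ left_multiples b (op x c)).
  refine (proj2 (left_ideal_below_idempotent_contains L _ _ _)).
  - exists (op e (op s e)). split.
    + rewrite <- !opA, e_idem. reflexivity.
    + exists e. unfold b. rewrite <- !opA. reflexivity.
  - intros x [xe _]. exact xe.
  - intros y x [xe xc]. split.
    + rewrite <- opA, xe. reflexivity.
    + rewrite <- opA. apply (left_multiples_trans _ _ _ xc). exists y. reflexivity.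
Qed.

End PrimitiveIdempotent.

Lemma completely_simple_mem_left_multiples :
  completely_simple op -> forall a t, left_multiples (op t a) a.
Proof.
  intros [_ [Ssimple [e [e_idem e_primitive]]]] a t.
  destruct (ideal_simple_factor Ssimple e a) as [u [v ->]].
  destruct (idempotent_mul_mem_left_multiples e e_idem e_primitive Ssimple (op t u) v)
    as [w ev].
  exists (op u w).
  transitivity (op u (op w (op (op t u) (op e v)))).
  - rewrite <- ev. reflexivity.
  - rewrite !opA. reflexivity.
Qed.

Section MinimalLeftMultiples.
Hypothesis mem_left_multiples : forall a t, left_multiples (op t a) a.

Lemma left_multiples_sym (a x : T) : left_multiples a x -> left_multiples x a.
Proof. intros [t ->]. apply mem_left_multiples. Qed.

Lemma left_multiples_subset (a b : T) :
  left_multiples a b -> subset (left_multiples a) (left_multiples b).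
Proof.
  intros ab x ax. exact (left_multiples_trans b a x (left_multiples_sym a b ab) ax).
Qed.

Lemma left_multiples_disjoint (a b : T) :
  ~ left_multiples a b -> forall x, left_multiples a x -> left_multiples b x -> False.
Proof.
  intros nab x ax bx.
  exact (nab (left_multiples_trans a x b ax (left_multiples_sym b x bx))).
Qed.

Lemma left_simple_of_left_multiples (a : T) :
  (forall x, left_multiples a x) -> left_simple_in op setT.
Proof.
  intros all_a J HJ x. split; [intros _; exact I | intros _].
  destruct (proj1 HJ) as [j Jj].
  apply (left_ideal_contains_left_multiples J j HJ Jj).
  exact (left_multiples_subset a j (all_a j) x (all_a x)).
Qed.

Lemma minimal_left_ideal_left_multiples (X : T -> Prop) (a : T) :
  same_set X (left_multiples a) -> minimal_left_ideal op X.
Proof.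
  intros HX. split.
  - destruct (left_ideal_left_multiples a) as [[x ax] [_ amul]].
    split; [exists x; apply HX, ax |].
    split; [intros z _; exact I |].
    intros y z _ Xz. apply HX, amul, HX, Xz. exact I.
  - intros J HJ JX x. split; [apply JX |]. intros Xx.
    destruct (proj1 HJ) as [j Jj].
    apply (left_ideal_contains_left_multiples J j HJ Jj).
    apply (left_multiples_subset a j); apply HX; [apply JX, Jj | exact Xx].
Qed.

Lemma minimal_left_ideal_eq (L X : T -> Prop) (a l : T) :
  same_set X (left_multiples a) -> minimal_left_ideal op L -> L l -> X l ->
  same_set L X.
Proof.
  intros HX [HL Lmin] Ll Xl x.
  assert (XL : subset X L).
  { intros z Xz. apply (left_ideal_contains_left_multiples L l HL Ll).
    apply (left_multiples_subset a l); apply HX; assumption. }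
  destruct (minimal_left_ideal_left_multiples X a HX) as [HXl _].
  split; [apply (Lmin X HXl XL) | apply XL].
Qed.

End MinimalLeftMultiples.

End Semigroup.

Theorem lemma2p10 (T : Type) (op : T -> T -> T) (S1 S2 : T -> Prop) :
  associative_op op ->
  completely_simple op ->
  (forall x, S1 x \/ S2 x) ->
  subsemigroup op S1 -> left_simple_in op S1 ->
  subsemigroup op S2 -> left_simple_in op S2 ->
  left_simple_in op setT \/
  ((forall x, ~ (S1 x /\ S2 x)) /\
   minimal_left_ideal op S1 /\ minimal_left_ideal op S2 /\
   (forall L, minimal_left_ideal op L -> same_set L S1 \/ same_set L S2)).
Proof.
  intros opA CS cover HS1 LS1 HS2 LS2.
  pose proof (completely_simple_mem_left_multiples op opA CS) as Hmem.
  destruct (proj1 HS1) as [a S1a]. destruct (proj1 HS2) as [b S2b].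
  pose proof (left_simple_subset_left_multiples op opA S1 a HS1 LS1 S1a) as S1_a.
  pose proof (left_simple_subset_left_multiples op opA S2 b HS2 LS2 S2b) as S2_b.
  destruct (classic (left_multiples op a b)) as [ab | nab].
  - left. apply (left_simple_of_left_multiples op opA Hmem a).
    intro x. destruct (cover x) as [H | H]; [exact (S1_a x H) |].
    exact (left_multiples_trans op opA a b x ab (S2_b x H)).
  - right.
    pose proof (left_multiples_disjoint op opA Hmem a b nab) as disj.
    assert (E1 : same_set S1 (left_multiples op a)).
    { intro x. split; [apply S1_a | intro ax].
      destruct (cover x) as [H | H]; [exact H | destruct (disj x ax (S2_b x H))]. }
    assert (E2 : same_set S2 (left_multiples op b)).
    { intro x. split; [apply S2_b | intro bx].
      destruct (cover x) as [H | H]; [destruct (disj x (S1_a x H) bx) | exact H]. }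
    split; [| split; [| split]].
    + intros x [H1 H2]. exact (disj x (S1_a x H1) (S2_b x H2)).
    + exact (minimal_left_ideal_left_multiples op opA Hmem S1 a E1).
    + exact (minimal_left_ideal_left_multiples op opA Hmem S2 b E2).
    + intros L HL. destruct (proj1 (proj1 HL)) as [l Ll].
      destruct (cover l) as [H | H]; [left | right];
        eapply (minimal_left_ideal_eq op opA Hmem); eassumption.
Qed.
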